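(* Let $n\ge3$, $a_0\in\mathbb{R}$, $a\in\mathbb{R}^n$ with $a_0+a^\top x>0$ for all $x\in\{0,1\}^n$. Let $I=\{i,j\}\subseteq[n]$ with $i\ne j$. Then $\operatorname{conv}(\mathcal{G}_I)$ equals the set of all $(\rho,y,x_i,x_j)\in\mathbb{R}\times\mathbb{R}^n\times\mathbb{R}\times\mathbb{R}$ for which there exists $w=(w_{uv})_{\{u,v\}\in E(I)}$ such that: (a) for every $\{u,v\}\in E(I)$: $w_{uv}\ge0$, $y_u+y_v-w_{uv}\le\rho$, $w_{uv}\le y_u$, $w_{uv}\le y_v$; (b) for every $k\in[n]\setminus\{i,j\}$: $y_i+y_j+y_k-w_{ij}-w_{jk}-w_{ik}\le\rho$, $-y_i+w_{ij}+w_{ik}-w_{jk}\le0$, $-y_j+w_{ij}-w_{ik}+w_{jk}\le0$, $-y_k-w_{ij}+w_{ik}+w_{jk}\le0$; (c) $\rho\ge0$ and $a_0\rho+a^\top y=1$; (d) $x_u=(a_0+a_u)y_u+\sum_{v\in[n]\setminus\{u\}}a_vw_{uv}$ for $u\in\{i,j\}$. Consequently the 2-term relaxation of the linear fractional polytope is the intersection over all such $I$ of these sets (each extended to the space of $(\rho,y,x)$).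
   Context: For $I\subseteq[n]$, $\mathcal{G}_I=\bigl\{\bigl(\frac{1}{a_0+a^\top x},\frac{x}{a_0+a^\top x},(x_i)_{i\in I}\bigr)\bigm| x\in\{0,1\}^n\bigr\}$. The linear fractional polytope is $\operatorname{conv}(\mathcal{G}_{[n]})$, and its $k$-term relaxation is $\bigcap_{I\subseteq[n],|I|=k}\operatorname{conv}(\mathcal{G}_I)$, where each $\operatorname{conv}(\mathcal{G}_I)$ is extended to the space of $(\rho,y,x)\in\mathbb{R}\times\mathbb{R}^n\times\mathbb{R}^n$ by leaving the coordinates $x_l$, $l\notin I$, free. $E(I)$ is the set of unordered pairs $\{u,v\}$ of distinct elements of $[n]$ with $u\in I$ or $v\in I$; $w_{uv}=w_{vu}$ denotes the variable of the pair $\{u,v\}$. *)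

From mathcomp Require Import all_boot all_order all_algebra.
From mathcomp Require Import reals.
Import Order.TTheory GRing.Theory Num.Theory.
Local Open Scope ring_scope.

Definition conv {R : numDomainType} {V : lmodType R} (S : V -> Prop) (p : V) : Prop :=
  exists (m : nat) (lam : 'I_m -> R) (v : 'I_m -> V),
    (forall k, 0 <= lam k) /\ \sum_(k < m) lam k = 1 /\
    (forall k, S (v k)) /\ p = \sum_(k < m) lam k *: v k.

Notation subI I := {u : 'I__ | u \in I}.

Definition denom {R : realType} {n : nat} (a0 : R) (a : 'rV[R]_n)
  (x : {ffun 'I_n -> bool}) : R :=
  a0 + \sum_(k < n) a 0 k * (x k)%:R.

Definition Gpt {R : realType} {n : nat} (a0 : R) (a : 'rV[R]_n) (I : {set 'I_n})
  (x : {ffun 'I_n -> bool}) : R^o * 'rV[R]_n * {ffun subI I -> R^o} :=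
  ((denom a0 a x)^-1, \row_(k < n) ((x k)%:R / denom a0 a x),
   [ffun s : subI I => (x (val s))%:R]).

Definition G {R : realType} {n : nat} (a0 : R) (a : 'rV[R]_n) (I : {set 'I_n})
  (p : R^o * 'rV[R]_n * {ffun subI I -> R^o}) : Prop :=
  exists x : {ffun 'I_n -> bool}, p = Gpt a0 a I x.

(* k-term relaxation: (rho,y,x) lies in conv(G_I), extended by leaving
   x_l (l ∉ I) free, for every I with |I| = k. *)
Definition relax_k {R : realType} {n : nat} (a0 : R) (a : 'rV[R]_n) (k : nat)
  (p : R^o * 'rV[R]_n * 'rV[R]_n) : Prop :=
  forall I : {set 'I_n}, #|I| = k ->
    conv (G a0 a I) (p.1.1, p.1.2, [ffun s : subI I => p.2 0 (val s)]).

(* The explicit description of conv(G_I) for I = {i,j}.  w u v is the variable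
   w_{uv} of the unordered pair {u,v} (so w is required symmetric); only the
   values on pairs of E(I) are constrained/used. *)
Definition PI {R : realType} {n : nat} (a0 : R) (a : 'rV[R]_n) (i j : 'I_n)
  (rho : R) (y : 'rV[R]_n) (xI : {ffun subI [set i; j] -> R^o}) : Prop :=
  exists w : 'I_n -> 'I_n -> R,
    (forall u v, w u v = w v u) /\
    (forall u v : 'I_n, u != v -> (u \in [set i; j]) || (v \in [set i; j]) ->
       [/\ 0 <= w u v, y 0 u + y 0 v - w u v <= rho,
           w u v <= y 0 u & w u v <= y 0 v]) /\
    (forall k : 'I_n, k \notin [set i; j] ->
       [/\ y 0 i + y 0 j + y 0 k - w i j - w j k - w i k <= rho,
           - y 0 i + w i j + w i k - w j k <= 0,
           - y 0 j + w i j - w i k + w j k <= 0 &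
           - y 0 k - w i j + w i k + w j k <= 0]) /\
    (0 <= rho /\ a0 * rho + \sum_(k < n) a 0 k * y 0 k = 1) /\
    (forall s : subI [set i; j],
       xI s = (a0 + a 0 (val s)) * y 0 (val s)
              + \sum_(v < n | v != val s) a 0 v * w (val s) v).

From mathcomp Require Import all_boot all_order all_algebra.
From mathcomp Require Import reals ring lra.
Import Order.TTheory GRing.Theory Num.Theory.
Local Open Scope ring_scope.

(* A point of conv(G_I) is a convex combination of points Gpt x; dividing each
   weight by a0 + a^T x turns it into a nonnegative measure z on {0,1}^n with
   rho = mass z, y = first moments and x_u = sum of z (a0 + a^T x) x_u.  Setting
   w_uv to the second moments, (a) and (b) hold pointwise on {0,1}^n, while (c)
   and (d) are the expansion of a0 + a^T x.
   Conversely, given (rho, y, w) satisfying (a)-(d), a measure with these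
   moments is obtained by distributing (x_i, x_j) over the four cells of the
   2x2 table determined by rho, y_i, y_j, w_ij, and, within each cell, drawing
   the other coordinates x_k independently; (a) and (b) for the triple {i,j,k}
   say exactly that the 2x2x2 table of (x_i, x_j, x_k) can be filled in. *)

Lemma sum_triple (A B C : nmodType) (T : finType) (f : T -> A * B * C) :
  \sum_t f t = (\sum_t (f t).1.1, \sum_t (f t).1.2, \sum_t (f t).2).
Proof.
rewrite [LHS]surjective_pairing [X in (X, _)]surjective_pairing.
congr (_, _, _).
- exact: (big_morph (fun p : A * B * C => p.1.1) (id1 := 0) (op1 := +%R)).
- exact: (big_morph (fun p : A * B * C => p.1.2) (id1 := 0) (op1 := +%R)).
- exact: (big_morph (fun p : A * B * C => p.2) (id1 := 0) (op1 := +%R)).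
Qed.

Lemma conv_sum {R : numDomainType} {V : lmodType R} (T : finType) (S : V -> Prop)
    (lam : T -> R) (v : T -> V) :
  (forall t, 0 <= lam t) -> \sum_t lam t = 1 -> (forall t, S (v t)) ->
  conv S (\sum_t lam t *: v t).
Proof.
move=> lam_ge0 lam_sum1 Sv.
exists #|T|, (fun k => lam (enum_val k)), (fun k => v (enum_val k)).
have enumE (W : nmodType) (f : T -> W) : \sum_t f t = \sum_(k < #|T|) f (enum_val k).
  exact: (big_enum_val (op := +%R) (A := T) f).
by rewrite -lam_sum1 !enumE.
Qed.

Section Moments.
Variables (R : realType) (n : nat) (T : finType).
Variables (z : T -> R) (X : T -> {ffun 'I_n -> bool}).

Definition mass := \sum_t z t.
Definition moment1 (u : 'I_n) := \sum_t z t * (X t u)%:R.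
Definition moment2 (u v : 'I_n) := \sum_t z t * ((X t u)%:R * (X t v)%:R).

Variables (a0 : R) (a : 'rV[R]_n).
Local Notation D t := (denom a0 a (X t)).

Lemma sum_denom : \sum_t z t * D t = a0 * mass + \sum_c a 0 c * moment1 c.
Proof.
rewrite /mass /moment1 mulr_sumr.
under [X in _ + X]eq_bigr do rewrite mulr_sumr.
rewrite exchange_big -big_split /=; apply: eq_bigr => t _.
rewrite /denom mulrDr mulr_sumr; congr (_ + _); first by rewrite mulrC.
by apply: eq_bigr => c _; rewrite mulrCA.
Qed.

Lemma sum_denom_bit (u : 'I_n) :
  \sum_t z t * D t * (X t u)%:R
  = (a0 + a 0 u) * moment1 u + \sum_(v | v != u) a 0 v * moment2 u v.
Proof.
rewrite /moment1 /moment2 mulr_sumr.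
under [X in _ + X]eq_bigr do rewrite mulr_sumr.
rewrite exchange_big -big_split /=; apply: eq_bigr => t _.
rewrite /denom (bigD1 u) //=; case: (X t u) => /=.
- rewrite [in RHS](eq_bigr (fun v => z t * (a 0 v * (X t v)%:R))); last by move=> v _; ring.
  by rewrite -mulr_sumr; ring.
- by rewrite [in RHS]big1 => [|v _]; ring.
Qed.

Lemma sum_Gpt (I : {set 'I_n}) : (forall t, D t != 0) ->
  \sum_t (z t * D t) *: Gpt a0 a I (X t)
  = (mass, \row_c moment1 c, [ffun s => \sum_t z t * D t * (X t (val s))%:R]).
Proof.
move=> D_neq0; rewrite sum_triple; congr (_, _, _).
- by apply: eq_bigr => t _; rewrite /Gpt /= [_ *: _]mulfK.
- apply/matrixP => r c; rewrite summxE !mxE /moment1; apply: eq_bigr => t _.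
  by rewrite /Gpt /= !mxE -mulrA [denom _ _ _ * _]mulrC divfK.
- by apply/ffunP => s; rewrite sum_ffunE ffunE; apply: eq_bigr => t _; rewrite /Gpt /= !ffunE.
Qed.

Hypothesis z_ge0 : forall t, 0 <= z t.

Lemma moment_pair_ineqs u v :
  [/\ 0 <= moment2 u v, moment1 u + moment1 v - moment2 u v <= mass,
      moment2 u v <= moment1 u & moment2 u v <= moment1 v].
Proof.
rewrite /mass /moment1 /moment2; split.
- by apply: sumr_ge0 => t _; rewrite !mulr_ge0.
- rewrite -subr_le0 -!sumrN -!big_split /=; apply: sumr_le0 => t _.
  by have := z_ge0 t; case: (X t u); case: (X t v) => /=; lra.
- rewrite -subr_le0 -!sumrN -!big_split /=; apply: sumr_le0 => t _.
  by have := z_ge0 t; case: (X t u); case: (X t v) => /=; lra.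
- rewrite -subr_le0 -!sumrN -!big_split /=; apply: sumr_le0 => t _.
  by have := z_ge0 t; case: (X t u); case: (X t v) => /=; lra.
Qed.

Lemma moment_triple_ineqs i j k :
  [/\ moment1 i + moment1 j + moment1 k - moment2 i j - moment2 j k - moment2 i k <= mass,
      - moment1 i + moment2 i j + moment2 i k - moment2 j k <= 0,
      - moment1 j + moment2 i j - moment2 i k + moment2 j k <= 0 &
      - moment1 k - moment2 i j + moment2 i k + moment2 j k <= 0].
Proof.
rewrite /mass /moment1 /moment2; split.
- rewrite -subr_le0 -!sumrN -!big_split /=; apply: sumr_le0 => t _.
  by have := z_ge0 t; case: (X t i); case: (X t j); case: (X t k) => /=; lra.
- rewrite -!sumrN -!big_split /=; apply: sumr_le0 => t _.
  by have := z_ge0 t; case: (X t i); case: (X t j); case: (X t k) => /=; lra.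
- rewrite -!sumrN -!big_split /=; apply: sumr_le0 => t _.
  by have := z_ge0 t; case: (X t i); case: (X t j); case: (X t k) => /=; lra.
- rewrite -!sumrN -!big_split /=; apply: sumr_le0 => t _.
  by have := z_ge0 t; case: (X t i); case: (X t j); case: (X t k) => /=; lra.
Qed.

Lemma moments_PI (i j : 'I_n) : \sum_t z t * D t = 1 ->
  PI a0 a i j mass (\row_c moment1 c) [ffun s => \sum_t z t * D t * (X t (val s))%:R].
Proof.
move=> z_norm; exists moment2; split.
  by move=> u v; apply: eq_bigr => t _; rewrite [_ * (X t u)%:R]mulrC.
split; first by move=> u v _ _; rewrite !mxE; apply: moment_pair_ineqs.
split; first by move=> k _; rewrite !mxE; apply: moment_triple_ineqs.
split; first split.
- exact: sumr_ge0.
- by rewrite -z_norm sum_denom; under eq_bigr do rewrite mxE.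
- by move=> s; rewrite ffunE sum_denom_bit mxE.
Qed.

End Moments.

Arguments mass {R T} z.
Arguments moment1 {R n T} z X u.
Arguments moment2 {R n T} z X u v.

Lemma conv_G_PI (R : realType) (n : nat) (a0 : R) (a : 'rV[R]_n) (i j : 'I_n)
    (rho : R) (y : 'rV[R]_n) (xI : {ffun {u : 'I_n | u \in [set i; j]} -> R^o}) :
  (forall x, 0 < denom a0 a x) ->
  conv (G a0 a [set i; j]) (rho, y, xI) -> PI a0 a i j rho y xI.
Proof.
move=> denom_gt0 [m [lam [v [lam_ge0 [lam_sum1 [Gv pE]]]]]].
have [X vE] := fin_all_exists Gv.
pose z k := lam k / denom a0 a (X k).
have D_neq0 k : denom a0 a (X k) != 0 by rewrite gt_eqF.
have lamE k : lam k = z k * denom a0 a (X k) by rewrite divfK.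
have {}pE : (rho, y, xI) = \sum_k (z k * denom a0 a (X k)) *: Gpt a0 a [set i; j] (X k).
  by rewrite pE; apply: eq_bigr => k _; rewrite vE -lamE.
rewrite sum_Gpt // in pE; case: pE => -> -> ->.
apply: moments_PI => [k|]; first by rewrite divr_ge0 // ltW.
by rewrite -lam_sum1; apply: eq_bigr => k _; rewrite -lamE.
Qed.

Lemma sum_prod_bernoulli (R : comNzRingType) (n : nat) (F : 'I_n -> bool -> R)
    (U : {set 'I_n}) :
  (forall u, F u false + F u true = 1) ->
  \sum_(x : {ffun 'I_n -> bool}) (\prod_u F u (x u)) * \prod_(u in U) ((x u)%:R : R)
  = \prod_(u in U) F u true.
Proof.
move=> F_sum1.
under [LHS]eq_bigr do rewrite [X in _ * X]big_mkcond -big_split /=.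
rewrite -(bigA_distr_bigA (fun u b => F u b * (if u \in U then b%:R else 1))).
rewrite [RHS]big_mkcond /=; apply: eq_bigr => u _.
rewrite big_bool /=; case: (u \in U); first by rewrite mulr1 mulr0 addr0.
by rewrite !mulr1 addrC F_sum1.
Qed.

Lemma sum_mixture_prod_bernoulli (R : comNzRingType) (C : finType) (n : nat)
    (p : C -> R) (F : C -> 'I_n -> bool -> R) (U : {set 'I_n}) :
  (forall c u, F c u false + F c u true = 1) ->
  \sum_(x : {ffun 'I_n -> bool}) (\sum_c p c * \prod_u F c u (x u)) * \prod_(u in U) ((x u)%:R : R)
  = \sum_c p c * \prod_(u in U) F c u true.
Proof.
move=> F_sum1; under eq_bigr do rewrite mulr_suml.
rewrite exchange_big; apply: eq_bigr => c _.
under eq_bigr do rewrite -mulrA.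
by rewrite -mulr_sumr sum_prod_bernoulli.
Qed.

Lemma sum_bool2 (V : nmodType) (f : bool * bool -> V) :
  \sum_c f c = f (true, true) + f (true, false) + f (false, true) + f (false, false).
Proof.
rewrite (eq_bigr (fun c => f (c.1, c.2))) => [|[] //].
by rewrite -(pair_bigA _ (fun b1 b2 => f (b1, b2))) /= !big_bool /= addrA.
Qed.

Lemma triple_moment_choice {R : realDomainType} {rho yi yj yk wij wik wjk : R} :
  0 <= wij -> yi + yj - wij <= rho -> wij <= yi -> wij <= yj ->
  0 <= wik -> yi + yk - wik <= rho -> wik <= yi -> wik <= yk ->
  0 <= wjk -> yj + yk - wjk <= rho -> wjk <= yj -> wjk <= yk ->
  yi + yj + yk - wij - wjk - wik <= rho -> - yi + wij + wik - wjk <= 0 ->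
  - yj + wij - wik + wjk <= 0 -> - yk - wij + wik + wjk <= 0 ->
  let s := Num.max (Num.max 0 (wik + wij - yi)) (Num.max (wjk + wij - yj) (wik + wjk - yk)) in
  [/\ 0 <= s <= wij, 0 <= wik - s <= yi - wij, 0 <= wjk - s <= yj - wij
    & 0 <= yk - wik - wjk + s <= rho - yi - yj + wij].
Proof.
move=> h1 h2 h3 h4 h5 h6 h7 h8 h9 h10 h11 h12 h13 h14 h15 h16 s.
have s1 : 0 <= s by rewrite /s !le_max lexx.
have s2 : wik + wij - yi <= s by rewrite /s !le_max lexx !orbT.
have s3 : wjk + wij - yj <= s by rewrite /s !le_max lexx !orbT.
have s4 : wik + wjk - yk <= s by rewrite /s !le_max lexx !orbT.
have u1 : s <= wij by rewrite /s !ge_max; apply/andP; split; apply/andP; split; lra.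
have u2 : s <= wik by rewrite /s !ge_max; apply/andP; split; apply/andP; split; lra.
have u3 : s <= wjk by rewrite /s !ge_max; apply/andP; split; apply/andP; split; lra.
have u4 : s <= rho - yi - yj - yk + wij + wik + wjk.
  by rewrite /s !ge_max; apply/andP; split; apply/andP; split; lra.
by clearbody s; split; apply/andP; split; lra.
Qed.

Section PairLift.
Variables (R : realType) (n : nat) (i j : 'I_n) (rho : R) (y : 'rV[R]_n).
Variable w : 'I_n -> 'I_n -> R.
Hypothesis neq_ij : i != j.
Hypothesis w_sym : forall u v, w u v = w v u.
Hypothesis pair_ineqs : forall u v : 'I_n, u != v ->
  (u \in [set i; j]) || (v \in [set i; j]) ->
  [/\ 0 <= w u v, y 0 u + y 0 v - w u v <= rho, w u v <= y 0 u & w u v <= y 0 v].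
Hypothesis triple_ineqs : forall k : 'I_n, k \notin [set i; j] ->
  [/\ y 0 i + y 0 j + y 0 k - w i j - w j k - w i k <= rho,
      - y 0 i + w i j + w i k - w j k <= 0,
      - y 0 j + w i j - w i k + w j k <= 0 &
      - y 0 k - w i j + w i k + w j k <= 0].

Definition pair_cell (c : bool * bool) : R :=
  match c with
  | (true, true) => w i j
  | (true, false) => y 0 i - w i j
  | (false, true) => y 0 j - w i j
  | (false, false) => rho - y 0 i - y 0 j + w i j
  end.

(* The least admissible mass of the cell x_i = x_j = x_k = 1; (b) makes it
   also at most the largest one. *)
Definition triple_mass (k : 'I_n) : R :=
  Num.max (Num.max 0 (w i k + w i j - y 0 i))
          (Num.max (w j k + w i j - y 0 j) (w i k + w j k - y 0 k)).

Definition triple_cell (k : 'I_n) (c : bool * bool) : R :=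
  match c with
  | (true, true) => triple_mass k
  | (true, false) => w i k - triple_mass k
  | (false, true) => w j k - triple_mass k
  | (false, false) => y 0 k - w i k - w j k + triple_mass k
  end.

(* Where [pair_cell c = 0] the division yields 0, harmless since then
   [triple_cell k c = 0] as well. *)
Definition cond_prob (k : 'I_n) (c : bool * bool) : R := triple_cell k c / pair_cell c.

Definition marginal (c : bool * bool) (u : 'I_n) (b : bool) : R :=
  if u == i then (b == c.1)%:R
  else if u == j then (b == c.2)%:R
  else if b then cond_prob u c else 1 - cond_prob u c.

Definition lift (x : {ffun 'I_n -> bool}) : R :=
  \sum_c pair_cell c * \prod_u marginal c u (x u).

Lemma pair_cell_ge0 c : 0 <= pair_cell c.
Proof.
have ij_in : (i \in [set i; j]) || (j \in [set i; j]) by rewrite set21.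
have [w0 w_rho w_yi w_yj] := pair_ineqs _ _ neq_ij ij_in.
by case: c => [[] []] /=; lra.
Qed.

Lemma triple_cell_bounds c k : k \notin [set i; j] -> 0 <= triple_cell k c <= pair_cell c.
Proof.
move=> kI; have /andP [ik jk] : (i != k) && (j != k) by move: kI; rewrite !inE negb_or !(eq_sym k).
have in_pair u v : u \in [set i; j] -> (u \in [set i; j]) || (v \in [set i; j]).
  by move=> ->.
have [wij0 wijr wiji wijj] := pair_ineqs _ _ neq_ij (in_pair _ j (set21 i j)).
have [wik0 wikr wiki wikk] := pair_ineqs _ _ ik (in_pair _ k (set21 i j)).
have [wjk0 wjkr wjkj wjkk] := pair_ineqs _ _ jk (in_pair _ k (set22 i j)).
have [t1 t2 t3 t4] := triple_ineqs _ kI.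
have [] := triple_moment_choice wij0 wijr wiji wijj wik0 wikr wiki wikk
  wjk0 wjkr wjkj wjkk t1 t2 t3 t4.
by case: c => [[] []].
Qed.

Lemma pair_cell_mul_cond_prob c k : k \notin [set i; j] ->
  pair_cell c * cond_prob k c = triple_cell k c.
Proof.
move=> kI; have /andP [t_ge0 t_le] := triple_cell_bounds c k kI.
have [p0|p_neq0] := eqVneq (pair_cell c) 0; last by rewrite mulrC divfK.
by rewrite p0 mul0r; rewrite p0 in t_le; lra.
Qed.

Lemma cond_prob_bounds c k : k \notin [set i; j] -> 0 <= cond_prob k c <= 1.
Proof.
move=> kI; have /andP [t_ge0 t_le] := triple_cell_bounds c k kI.
have [p0|p_neq0] := eqVneq (pair_cell c) 0.
  by rewrite /cond_prob p0 invr0 mulr0 lexx ler01.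
have p_gt0 : 0 < pair_cell c by rewrite lt0r p_neq0 pair_cell_ge0.
by rewrite divr_ge0 ?ler_pdivrMr ?mul1r // ltW.
Qed.

Lemma marginal_i c : marginal c i true = c.1%:R.
Proof. by rewrite /marginal eqxx; case: c => [[] []]. Qed.

Lemma marginal_j c : marginal c j true = c.2%:R.
Proof. by rewrite /marginal eq_sym (negbTE neq_ij) eqxx; case: c => [[] []]. Qed.

Lemma marginal_out c k : k \notin [set i; j] -> marginal c k true = cond_prob k c.
Proof. by rewrite !inE negb_or /marginal => /andP [/negbTE -> /negbTE ->]. Qed.

Lemma marginal_sum1 c u : marginal c u false + marginal c u true = 1.
Proof.
rewrite /marginal; case: ifP => _; first by case: c => [[] []]; rewrite /= ?add0r ?addr0.
case: ifP => _; first by case: c => [[] []]; rewrite /= ?add0r ?addr0.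
by rewrite subrK.
Qed.

Lemma marginal_ge0 c u b : 0 <= marginal c u b.
Proof.
rewrite /marginal; case: ifP => ui; first exact: ler0n.
case: ifP => uj; first exact: ler0n.
have /andP [q_ge0 q_le1] : 0 <= cond_prob u c <= 1.
  by apply: cond_prob_bounds; rewrite !inE ui uj.
by case: b; rewrite ?subr_ge0.
Qed.

Lemma lift_ge0 x : 0 <= lift x.
Proof.
apply: sumr_ge0 => c _.
by rewrite mulr_ge0 ?pair_cell_ge0 // prodr_ge0 // => u _; apply: marginal_ge0.
Qed.

Lemma lift_prod_moment (U : {set 'I_n}) :
  \sum_x lift x * \prod_(u in U) ((x u)%:R : R)
  = \sum_c pair_cell c * \prod_(u in U) marginal c u true.
Proof. by apply: sum_mixture_prod_bernoulli => c u; apply: marginal_sum1. Qed.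

Lemma lift_mass : mass lift = rho.
Proof.
transitivity (\sum_x lift x * \prod_(u in set0) ((x u)%:R : R)).
  by apply: eq_bigr => x _; rewrite big_set0 mulr1.
by rewrite lift_prod_moment sum_bool2 !big_set0 /=; ring.
Qed.

Lemma lift_moment1 k : moment1 lift id k = y 0 k.
Proof.
transitivity (\sum_x lift x * \prod_(u in [set k]) ((x u)%:R : R)).
  by apply: eq_bigr => x _; rewrite big_set1.
rewrite lift_prod_moment; under eq_bigr do rewrite big_set1.
have [->|ki] := eqVneq k i; first by rewrite sum_bool2 !marginal_i /=; ring.
have [->|kj] := eqVneq k j; first by rewrite sum_bool2 !marginal_j /=; ring.
have kI : k \notin [set i; j] by rewrite !inE negb_or ki kj.
under eq_bigr do rewrite marginal_out // pair_cell_mul_cond_prob //.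
by rewrite sum_bool2 /=; ring.
Qed.

Lemma lift_moment2 u v : u \in [set i; j] -> v != u -> moment2 lift id u v = w u v.
Proof.
move=> uI vu; have u_notin : u \notin [set v] by rewrite inE eq_sym.
transitivity (\sum_x lift x * \prod_(t in [set u; v]) ((x t)%:R : R)).
  by apply: eq_bigr => x _; rewrite big_setU1 // big_set1.
rewrite lift_prod_moment; under eq_bigr do rewrite big_setU1 // big_set1.
have [vI|vI] := boolP (v \in [set i; j]).
  have [[-> ->]|[-> ->]] : (u = i /\ v = j) \/ (u = j /\ v = i).
    by move: uI vI vu; rewrite !inE => /orP [] /eqP -> /orP [] /eqP ->;
      rewrite ?eqxx //; by [left | right].
  - by rewrite sum_bool2 !marginal_i !marginal_j /=; ring.
  - by rewrite w_sym sum_bool2 !marginal_i !marginal_j /=; ring.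
under eq_bigr do rewrite mulrCA (marginal_out _ _ vI) pair_cell_mul_cond_prob //.
by case/set2P: uI => ->; rewrite sum_bool2 ?marginal_i ?marginal_j /=; ring.
Qed.

End PairLift.

Arguments lift {R n} i j rho y w x.

Lemma PI_conv_G (R : realType) (n : nat) (a0 : R) (a : 'rV[R]_n) (i j : 'I_n)
    (rho : R) (y : 'rV[R]_n) (xI : {ffun {u : 'I_n | u \in [set i; j]} -> R^o}) :
  i != j -> (forall x, 0 < denom a0 a x) ->
  PI a0 a i j rho y xI -> conv (G a0 a [set i; j]) (rho, y, xI).
Proof.
move=> neq_ij denom_gt0 [w [w_sym [pair_ineqs [triple_ineqs [[_ y_norm] xIE]]]]].
pose mu := lift i j rho y w.
have mu_norm : \sum_x mu x * denom a0 a x = 1.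
  rewrite (@sum_denom _ _ _ mu id) lift_mass -y_norm; congr (_ + _).
  by apply: eq_bigr => c _; rewrite lift_moment1.
have -> : (rho, y, xI) = \sum_x (mu x * denom a0 a x) *: Gpt a0 a [set i; j] x.
  rewrite (@sum_Gpt _ _ _ mu id) => [|x]; last by rewrite gt_eqF.
  congr (_, _, _); first by rewrite lift_mass.
    by apply/matrixP => r c; rewrite ord1 mxE lift_moment1.
  apply/ffunP => s; rewrite !ffunE xIE (@sum_denom_bit _ _ _ mu id) lift_moment1 //.
  by congr (_ + _); apply: eq_bigr => v vs; rewrite lift_moment2 // (valP s).
apply: conv_sum => [x||x]; last by exists x.
- by apply: mulr_ge0; [apply: lift_ge0 | apply: ltW].
- exact: mu_norm.
Qed.

Theorem corollary1 (R : realType) (n : nat) (a0 : R) (a : 'rV[R]_n) :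
  (3 <= n)%N ->
  (forall x : {ffun 'I_n -> bool}, 0 < denom a0 a x) ->
  (forall i j : 'I_n, i != j ->
     forall (rho : R) (y : 'rV[R]_n) (xI : {ffun {u : 'I_n | u \in [set i; j]} -> R^o}),
       conv (G a0 a [set i; j]) (rho, y, xI) <-> PI a0 a i j rho y xI) /\
  (forall p : R^o * 'rV[R]_n * 'rV[R]_n,
     relax_k a0 a 2 p <->
     (forall i j : 'I_n, i != j ->
        PI a0 a i j p.1.1 p.1.2 [ffun s : {u : 'I_n | u \in [set i; j]} => p.2 0 (val s)])).
Proof.
move=> _ denom_gt0.
have convE i j : i != j -> forall rho y xI,
    conv (G a0 a [set i; j]) (rho, y, xI) <-> PI a0 a i j rho y xI.
  by move=> neq_ij rho y xI; split; [exact: conv_G_PI | exact: PI_conv_G].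
split=> // p; split.
- by move=> relax i j neq_ij; apply/convE => //; apply: relax; rewrite cards2 neq_ij.
- by move=> PIp I /eqP /cards2P [u [v [neq_uv ->]]]; apply/convE => //; apply: PIp.
Qed.
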